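(* Let $\mathbf A$ be a WHB-algebra. Then $T(\mathbf A)=(\mathcal B(\mathbf A),\cup,\cap,{}^c,G_{\mathbf A},H_{\mathbf A},\emptyset,X(\mathbf A))$ is a tense algebra.
   Context: A WHB-algebra is an algebra $(A,\wedge,\vee,\to,\leftarrow,0,1)$ such that $(A,\wedge,\vee,0,1)$ is a bounded distributive lattice and for all $a,b,c\in A$: $a\to a=1$; $a\to(b\wedge c)=(a\to b)\wedge(a\to c)$; $(a\vee b)\to c=(a\to c)\wedge(b\to c)$; $(a\to b)\wedge(b\to c)\le a\to c$; $a\leftarrow a=0$; $(a\vee b)\leftarrow c=(a\leftarrow c)\vee(b\leftarrow c)$; $a\leftarrow(b\wedge c)=(a\leftarrow b)\vee(a\leftarrow c)$; $a\leftarrow c\le(a\leftarrow b)\vee(b\leftarrow c)$; $a\wedge((a\to b)\leftarrow 0)\le b$; $a\le b\vee(1\to(a\leftarrow b))$. $X(\mathbf A)$ is the set of prime filters of $\mathbf A$, $\sigma_{\mathbf A}(a)=\{P\colon a\in P\}$, $\tau_{\mathbf A}$ the topology on $X(\mathbf A)$ with subbase $\{\sigma_{\mathbf A}(a)\}\cup\{X(\mathbf A)\setminus\sigma_{\mathbf A}(a)\}$, and $\mathcal B(\mathbf A)$ the set of $\tau_{\mathbf A}$-clopen subsets (equivalently, finite unions of sets $\sigma_{\mathbf A}(a)\setminus\sigma_{\mathbf A}(b)$). $(P,Q)\in R_{\mathbf A}$ iff for all $a,b$ ($a\to b\in P$, $a\in Q$ imply $b\in Q$); $(P,Q)\in S_{\mathbf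 A}$ iff for all $a,b$ ($a\in Q$, $b\notin Q$ imply $a\leftarrow b\in P$). $G_{\mathbf A}(U)=\{P\colon R_{\mathbf A}(P)\subseteq U\}$ and $H_{\mathbf A}(U)=\{P\colon S_{\mathbf A}(P)\subseteq U\}$, where $\mathcal R(P)=\{Q\colon(P,Q)\in\mathcal R\}$. A tense algebra is $(\mathbf B,G,H)$ with $\mathbf B$ a Boolean algebra and unary operations $G,H$ such that, with $P(x)=\neg H(\neg x)$ and $F(x)=\neg G(\neg x)$: $P(x)\le y\iff x\le G(y)$ and $F(x)\le y\iff x\le H(y)$ for all $x,y$. *)

From Stdlib Require Import List.
Import ListNotations.

Set Implicit Arguments.

Record WHB := {
  carrier :> Type;
  meet : carrier -> carrier -> carrier;
  join : carrier -> carrier -> carrier;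
  imp : carrier -> carrier -> carrier;
  coimp : carrier -> carrier -> carrier;
  bot : carrier;
  top : carrier;
  meetA : forall a b c, meet a (meet b c) = meet (meet a b) c;
  joinA : forall a b c, join a (join b c) = join (join a b) c;
  meetC : forall a b, meet a b = meet b a;
  joinC : forall a b, join a b = join b a;
  meet_absorb : forall a b, meet a (join a b) = a;
  join_absorb : forall a b, join a (meet a b) = a;
  meet_distr : forall a b c, meet a (join b c) = join (meet a b) (meet a c);
  join_bot : forall a, join a bot = a;
  meet_top : forall a, meet a top = a;
  (* axioms for imp (using a <= b := meet a b = a) *)
  imp_refl : forall a, imp a a = top;
  imp_meet : forall a b c, imp a (meet b c) = meet (imp a b) (imp a c);
  imp_join : forall a b c, imp (join a b) c = meet (imp a c) (imp b c);
  imp_trans : forall a b c,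
      meet (meet (imp a b) (imp b c)) (imp a c) = meet (imp a b) (imp b c);
  coimp_refl : forall a, coimp a a = bot;
  coimp_join : forall a b c, coimp (join a b) c = join (coimp a c) (coimp b c);
  coimp_meet : forall a b c, coimp a (meet b c) = join (coimp a b) (coimp a c);
  coimp_trans : forall a b c,
      meet (coimp a c) (join (coimp a b) (coimp b c)) = coimp a c;
  ax_mix1 : forall a b, meet (meet a (coimp (imp a b) bot)) b
                        = meet a (coimp (imp a b) bot);
  ax_mix2 : forall a b, meet a (join b (imp top (coimp a b))) = a
}.

Section Dual.
Variable A : WHB.

Definition le (a b : A) : Prop := meet A a b = a.

Definition prime_filter (P : A -> Prop) : Prop :=
  P (top A) /\
  ~ P (bot A) /\
  (forall a b, P a -> le a b -> P b) /\
  (forall a b, P a -> P b -> P (meet A a b)) /\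
  (forall a b, P (join A a b) -> P a \/ P b).

Definition PF : Type := { P : A -> Prop | prime_filter P }.

Definition mem (a : A) (P : PF) : Prop := proj1_sig P a.

Definition pfset : Type := PF -> Prop.

Definition sigma (a : A) : pfset := fun P => mem a P.

Definition sub (U V : pfset) : Prop := forall P, U P -> V P.
Definition cup (U V : pfset) : pfset := fun P => U P \/ V P.
Definition cap (U V : pfset) : pfset := fun P => U P /\ V P.
Definition compl (U : pfset) : pfset := fun P => ~ U P.
Definition emptyset : pfset := fun _ => False.
Definition fullset : pfset := fun _ => True.

(** Subbasic sets of tau_A: sigma(a) (flag true) or X \ sigma(a) (flag false). *)
Definition subbasic (s : bool * A) : pfset :=
  if fst s then sigma (snd s) else compl (sigma (snd s)).

Definition basic (l : list (bool * A)) : pfset :=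
  fun P => forall s, In s l -> subbasic s P.

Definition is_open (U : pfset) : Prop :=
  forall P, U P -> exists l, basic l P /\ sub (basic l) U.

Definition clopen (U : pfset) : Prop := is_open U /\ is_open (compl U).

Definition R_A (P Q : PF) : Prop :=
  forall a b, mem (imp A a b) P -> mem a Q -> mem b Q.
Definition S_A (P Q : PF) : Prop :=
  forall a b, mem a Q -> ~ mem b Q -> mem (coimp A a b) P.

Definition G_A (U : pfset) : pfset := fun P => forall Q, R_A P Q -> U Q.
Definition H_A (U : pfset) : pfset := fun P => forall Q, S_A P Q -> U Q.

End Dual.

Definition tense_algebra_of_sets {X : Type} (B : (X -> Prop) -> Prop)
  (G H : (X -> Prop) -> (X -> Prop)) : Prop :=
  let sub := fun U V : X -> Prop => forall x, U x -> V x in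
  let compl := fun (U : X -> Prop) x => ~ U x in
  B (fun _ => False) /\ B (fun _ => True) /\
  (forall U V, B U -> B V -> B (fun x => U x \/ V x)) /\
  (forall U V, B U -> B V -> B (fun x => U x /\ V x)) /\
  (forall U, B U -> B (compl U)) /\
  (forall U, B U -> B (G U)) /\
  (forall U, B U -> B (H U)) /\
  (forall U V, B U -> B V ->
     (sub (compl (H (compl U))) V <-> sub U (G V))) /\
  (forall U V, B U -> B V ->
     (sub (compl (G (compl U))) V <-> sub U (H V))).

(* Everything rests on a prime filter theorem relative to an arbitrary
   entailment on A: a preorder [rel] containing <= with [rel x y -> rel x z ->
   rel x (meet y z)] and [rel x z -> rel y z -> rel (join x y) z].  If [~ rel b a],
   a maximal [rel]-closed filter containing [b] and avoiding [a] is prime.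

   For the entailments "x -> y is in P" and "x <- y is not in P" this gives
   G_A(X \ sigma(a) u sigma(b)) = sigma(a -> b) and
   H_A(X \ sigma(a) u sigma(b)) = X \ sigma(a <- b).
   For the entailment generated by the pairs (m, j) such that a clopen U is
   constant on sigma(m) \ sigma(j), it gives compactness: finitely many such
   regions cover X(A), and U is the intersection of the clauses
   X \ sigma(m) u sigma(j) over the regions missing U.  Hence the clopen sets
   are exactly the finite intersections of clauses, and G_A and H_A preserve
   them.  Finally the two mixed axioms make R_A the converse of S_A, which is
   what the two adjunctions of a tense algebra amount to. *)

From Stdlib Require Import List Classical.
From mathcomp Require classical_sets boolp.
Import ListNotations.

Set Implicit Arguments.

Lemma zorn_inclusion (T : Type) (admissible : (T -> Prop) -> Prop) (F0 : T -> Prop) :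
  admissible F0 ->
  (forall C : (T -> Prop) -> Prop, (exists F, C F) ->
     (forall F, C F -> admissible F) ->
     (forall F G, C F -> C G -> (forall x, F x -> G x) \/ (forall x, G x -> F x)) ->
     admissible (fun x => exists F, C F /\ F x)) ->
  exists M, admissible M /\
    forall F, admissible F -> (forall x, M x -> F x) -> forall x, F x -> M x.
Proof.
  intros adm0 adm_chain.
  set (incl := fun s t : sig admissible =>
                 boolp.asbool (forall x, proj1_sig s x -> proj1_sig t x)).
  destruct (@classical_sets.ZL_preorder _ (exist _ F0 adm0) incl) as [[M admM] maxM].
  - intro s. apply boolp.asboolT. auto.
  - intros r s t. unfold incl. rewrite !boolp.asboolE. auto.
  - intros C total.
    destruct (classic (exists s, C s)) as [[s0 Cs0] | empty].
    + set (U := fun x => exists F, (exists s, C s /\ proj1_sig s = F) /\ F x).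
      assert (admU : admissible U).
      { apply adm_chain.
        - exists (proj1_sig s0). eauto.
        - intros F [s [_ <-]]. exact (proj2_sig s).
        - intros F G [s [Cs <-]] [t [Ct <-]].
          destruct (total s t Cs Ct) as [st | st]; unfold incl in st;
            rewrite boolp.asboolE in st; auto. }
      exists (exist _ U admU). intros s Cs. unfold incl. rewrite boolp.asboolE.
      intros x sx. exists (proj1_sig s). eauto.
    + exists (exist _ F0 adm0). intros s Cs. exfalso. eauto.
  - exists M. split; [exact admM |].
    intros F admF MF. specialize (maxM (exist _ F admF)). unfold incl in maxM.
    rewrite !boolp.asboolE in maxM. exact (maxM MF).
Qed.

Section Lattice.
Variable A : WHB.
Local Infix "⊓" := (meet A) (at level 40, left associativity).
Local Infix "⊔" := (join A) (at level 50, left associativity).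
Local Infix "≤" := (le A) (at level 70).

Lemma meet_idem x : x ⊓ x = x.
Proof. rewrite <- (join_absorb A x x) at 2. apply meet_absorb. Qed.

Lemma le_refl x : x ≤ x.
Proof. apply meet_idem. Qed.

Lemma le_trans x y z : x ≤ y -> y ≤ z -> x ≤ z.
Proof. unfold le. intros xy yz. rewrite <- xy, <- meetA, yz. reflexivity. Qed.

Lemma meet_le_l x y : x ⊓ y ≤ x.
Proof. unfold le. rewrite (meetC A (x ⊓ y) x), meetA, meet_idem. reflexivity. Qed.

Lemma meet_le_r x y : x ⊓ y ≤ y.
Proof. unfold le. rewrite <- meetA, meet_idem. reflexivity. Qed.

Lemma le_meet x y z : z ≤ x -> z ≤ y -> z ≤ x ⊓ y.
Proof. unfold le. intros zx zy. rewrite meetA, zx, zy. reflexivity. Qed.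

Lemma meet_le_meet_l x y z : x ≤ y -> x ⊓ z ≤ y ⊓ z.
Proof.
  intro xy. apply le_meet.
  - eapply le_trans; [apply meet_le_l | exact xy].
  - apply meet_le_r.
Qed.

Lemma le_join_l x y : x ≤ x ⊔ y.
Proof. apply meet_absorb. Qed.

Lemma le_join_r x y : y ≤ x ⊔ y.
Proof. rewrite joinC. apply meet_absorb. Qed.

Lemma le_top x : x ≤ top A.
Proof. apply meet_top. Qed.

Lemma bot_le x : bot A ≤ x.
Proof. unfold le. rewrite <- (join_bot A x) at 1. rewrite joinC. apply meet_absorb. Qed.

Lemma join_of_le x y : x ≤ y -> x ⊔ y = y.
Proof. unfold le. intro xy. rewrite <- xy, joinC, meetC. apply join_absorb. Qed.

Lemma imp_of_le x y : x ≤ y -> imp A x y = top A.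
Proof.
  intro xy. pose proof (imp_join A x y y) as E.
  rewrite join_of_le, imp_refl, meet_top in E by exact xy. congruence.
Qed.

Lemma coimp_of_le x y : x ≤ y -> coimp A x y = bot A.
Proof.
  intro xy. pose proof (coimp_join A x y y) as E.
  rewrite join_of_le, coimp_refl, join_bot in E by exact xy. congruence.
Qed.

End Lattice.

Section PrimeFilter.
Variables (A : WHB) (P : PF A).

Lemma mem_top : mem (top A) P.
Proof. apply (proj2_sig P). Qed.

Lemma mem_bot : ~ mem (bot A) P.
Proof. apply (proj2_sig P). Qed.

Lemma mem_le x y : mem x P -> le A x y -> mem y P.
Proof. apply (proj2_sig P). Qed.

Lemma mem_meet x y : mem (meet A x y) P <-> mem x P /\ mem y P.
Proof.
  split.
  - intro xy. split; eapply mem_le; eauto using meet_le_l, meet_le_r.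
  - intros [x_in y_in]. apply (proj2_sig P); assumption.
Qed.

Lemma mem_join x y : mem (join A x y) P <-> mem x P \/ mem y P.
Proof.
  split.
  - apply (proj2_sig P).
  - intros [in_x | in_y]; eapply mem_le; eauto using le_join_l, le_join_r.
Qed.

End PrimeFilter.

Section Separation.
Variable A : WHB.
Local Infix "⊓" := (meet A) (at level 40, left associativity).
Local Infix "⊔" := (join A) (at level 50, left associativity).
Local Infix "≤" := (le A) (at level 70).

Record entailment (rel : A -> A -> Prop) : Prop := {
  entail_le : forall x y, x ≤ y -> rel x y;
  entail_trans : forall x y z, rel x y -> rel y z -> rel x z;
  entail_meet : forall x y z, rel x y -> rel x z -> rel x (y ⊓ z);
  entail_join : forall x y z, rel x z -> rel y z -> rel (x ⊔ y) z
}.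

Variables (rel : A -> A -> Prop) (b a : A).
Hypothesis rel_entailment : entailment rel.

Lemma entail_le_trans x y z : x ≤ y -> rel y z -> rel x z.
Proof. intro xy. apply entail_trans, entail_le; assumption. Qed.

Record separating (F : A -> Prop) : Prop := {
  separating_mem : F b;
  separating_rel : forall x y, F x -> rel x y -> F y;
  separating_meet : forall x y, F x -> F y -> F (x ⊓ y);
  separating_not_mem : ~ F a
}.

Lemma separating_adjoin F x :
  separating F -> (forall f, F f -> ~ rel (f ⊓ x) a) ->
  separating (fun z => exists f, F f /\ rel (f ⊓ x) z).
Proof.
  intros sepF no_a. split.
  - exists b. split; [apply sepF |]. apply entail_le, meet_le_l; assumption.
  - intros y z [f [Ff fy]] yz. exists f. split; [exact Ff |].
    eapply entail_trans; eassumption.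
  - intros y z [f [Ff fy]] [g [Fg gz]]. exists (f ⊓ g).
    split; [apply sepF; assumption |].
    apply entail_meet; [assumption | |].
    + eapply entail_le_trans; [apply meet_le_meet_l, meet_le_l | exact fy].
    + eapply entail_le_trans; [apply meet_le_meet_l, meet_le_r | exact gz].
  - intros [f [Ff fa]]. exact (no_a f Ff fa).
Qed.

Lemma maximal_separating_prime F :
  separating F ->
  (forall G, separating G -> (forall x, F x -> G x) -> forall x, G x -> F x) ->
  prime_filter A F.
Proof.
  intros sepF maxF.
  assert (outside : forall x, ~ F x -> exists f, F f /\ rel (f ⊓ x) a).
  { intros x not_Fx. apply NNPP. intro none.
    pose proof (separating_adjoin x sepF (fun f Ff fx => none (ex_intro _ f (conj Ff fx))))
      as sep_adjoined.
    apply not_Fx, (maxF _ sep_adjoined).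
    - intros z Fz. exists z. split; [exact Fz |]. apply entail_le, meet_le_l; assumption.
    - exists b. split; [apply sepF |]. apply entail_le, meet_le_r; assumption. }
  assert (up : forall x y, F x -> x ≤ y -> F y).
  { intros x y Fx xy. eapply separating_rel; [exact sepF | exact Fx |].
    apply entail_le; assumption. }
  repeat split.
  - eapply up; [apply sepF | apply le_top].
  - intro Fbot. apply sepF. eapply up; [exact Fbot | apply bot_le].
  - exact up.
  - apply sepF.
  - intros x y Fxy. apply NNPP. intro neither.
    destruct (outside x) as [f [Ff fx]]; [tauto |].
    destruct (outside y) as [g [Fg gy]]; [tauto |].
    apply (separating_not_mem sepF), (separating_rel sepF (x := (f ⊓ g) ⊓ (x ⊔ y))).
    + repeat apply sepF; assumption.
    + rewrite meet_distr. apply entail_join; [assumption | |].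
      * eapply entail_le_trans; [apply meet_le_meet_l, meet_le_l | exact fx].
      * eapply entail_le_trans; [apply meet_le_meet_l, meet_le_r | exact gy].
Qed.

Theorem prime_filter_separation :
  ~ rel b a ->
  exists Q : PF A, mem b Q /\ ~ mem a Q /\ forall x y, rel x y -> mem x Q -> mem y Q.
Proof.
  intro not_ba.
  destruct (zorn_inclusion separating (rel b)) as [F [sepF maxF]].
  - split.
    + apply entail_le, le_refl; assumption.
    + intros x y bx xy. eapply entail_trans; eassumption.
    + intros x y. apply entail_meet; assumption.
    + exact not_ba.
  - intros C [F0 CF0] sepC chain. split.
    + exists F0. split; [exact CF0 | apply sepC, CF0].
    + intros x y [F [CF Fx]] xy. exists F. split; [exact CF |].
      eapply separating_rel; eauto.
    + intros x y [F [CF Fx]] [G [CG Gy]].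
      destruct (chain F G CF CG) as [FG | GF].
      * exists G. split; [exact CG |]. apply sepC; auto.
      * exists F. split; [exact CF |]. apply sepC; auto.
    + intros [F [CF Fa]]. exact (separating_not_mem (sepC F CF) Fa).
  - exists (exist _ F (maximal_separating_prime sepF maxF)).
    unfold mem; simpl. split; [apply sepF |]. split; [apply sepF |].
    intros x y xy Fx. eapply separating_rel; eassumption.
Qed.

End Separation.

Section Modalities.
Variable A : WHB.

Definition clause (a b : A) : pfset A := fun Q => mem a Q -> mem b Q.

Lemma imp_entailment (P : PF A) : entailment A (fun x y => mem (imp A x y) P).
Proof.
  split.
  - intros x y xy. rewrite imp_of_le by exact xy. apply mem_top.
  - intros x y z xy yz. eapply mem_le; [| apply (imp_trans A x y z)].
    apply mem_meet. split; assumption.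
  - intros x y z xy xz. rewrite imp_meet. apply mem_meet. split; assumption.
  - intros x y z xz yz. rewrite imp_join. apply mem_meet. split; assumption.
Qed.

Lemma not_coimp_entailment (P : PF A) : entailment A (fun x y => ~ mem (coimp A x y) P).
Proof.
  split.
  - intros x y xy. rewrite coimp_of_le by exact xy. apply mem_bot.
  - intros x y z xy yz xz. rewrite <- (coimp_trans A x y z), mem_meet, mem_join in xz.
    tauto.
  - intros x y z xy xz. rewrite coimp_meet, mem_join. tauto.
  - intros x y z xz yz. rewrite coimp_join, mem_join. tauto.
Qed.

Lemma G_A_clause (P : PF A) a b : G_A (clause a b) P <-> mem (imp A a b) P.
Proof.
  split.
  - intro G_ab. apply NNPP. intro not_ab.
    destruct (prime_filter_separation a b (imp_entailment P) not_ab)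
      as [Q [a_in [b_out R_PQ]]].
    exact (b_out (G_ab Q R_PQ a_in)).
  - intros ab Q R_PQ. exact (R_PQ a b ab).
Qed.

Lemma H_A_clause (P : PF A) a b : H_A (clause a b) P <-> ~ mem (coimp A a b) P.
Proof.
  split.
  - intros H_ab ab.
    destruct (prime_filter_separation a b (not_coimp_entailment P) (fun n => n ab))
      as [Q [a_in [b_out closed]]].
    apply b_out, H_ab; [| exact a_in].
    intros x y x_in y_out. apply NNPP. intro not_xy. exact (y_out (closed x y not_xy x_in)).
  - intros not_ab Q S_PQ a_in. apply NNPP. intro b_out. exact (not_ab (S_PQ a b a_in b_out)).
Qed.

Lemma R_A_converse (P Q : PF A) : R_A P Q <-> S_A Q P.
Proof.
  split.
  - intros R_PQ x y x_in y_out.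
    assert (split_x : mem (join A y (imp A (top A) (coimp A x y))) P)
      by (eapply mem_le; [exact x_in | apply ax_mix2]).
    apply mem_join in split_x. destruct split_x as [y_in | top_imp]; [contradiction |].
    exact (R_PQ _ _ top_imp (mem_top Q)).
  - intros S_QP c d cd c_in.
    assert (cd_co : mem (coimp A (imp A c d) (bot A)) Q) by (apply S_QP; auto using mem_bot).
    eapply mem_le; [| apply (ax_mix1 A c d)]. apply mem_meet. split; assumption.
Qed.

Definition clauses (K : list (A * A)) : pfset A :=
  fun P => forall k, In k K -> clause (fst k) (snd k) P.

Definition clausal (U : pfset A) : Prop := exists K, forall P, U P <-> clauses K P.

Lemma clauses_map (f : A * A -> A * A) K P :
  clauses (map f K) P <-> forall k, In k K -> clause (fst (f k)) (snd (f k)) P.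
Proof.
  split.
  - intros Kf k k_in. apply Kf, in_map, k_in.
  - intros Kf k' k'_in. apply in_map_iff in k'_in. destruct k'_in as [k [<- k_in]]. auto.
Qed.

Lemma clausal_G_A U : clausal U -> clausal (G_A U).
Proof.
  intros [K UK]. exists (map (fun k => (top A, imp A (fst k) (snd k))) K).
  intro P. rewrite clauses_map. simpl. split.
  - intros G_U k k_in _. apply G_A_clause.
    intros Q R_PQ. apply UK; auto.
  - intros Kimp Q R_PQ. apply UK. intros k k_in.
    apply (G_A_clause P (fst k) (snd k)); [| exact R_PQ].
    apply (Kimp k k_in), mem_top.
Qed.

Lemma clausal_H_A U : clausal U -> clausal (H_A U).
Proof.
  intros [K UK]. exists (map (fun k => (coimp A (fst k) (snd k), bot A)) K).
  intro P. rewrite clauses_map. simpl. split.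
  - intros H_U k k_in co_in. exfalso.
    refine (proj1 (H_A_clause P (fst k) (snd k)) _ co_in).
    intros Q S_PQ. apply UK; auto.
  - intros Kco Q S_PQ. apply UK. intros k k_in.
    apply (H_A_clause P (fst k) (snd k)); [| exact S_PQ].
    intro co_in. exact (mem_bot P (Kco k k_in co_in)).
Qed.

End Modalities.

Section Topology.
Variable A : WHB.

Lemma is_open_ext (U V : pfset A) : (forall P, U P <-> V P) -> is_open U -> is_open V.
Proof.
  intros UV openU P VP. destruct (openU P (proj2 (UV P) VP)) as [l [lP lU]].
  exists l. split; [exact lP |]. intros Q lQ. apply UV, lU, lQ.
Qed.

Lemma basic_app (l1 l2 : list (bool * A)) P :
  basic (l1 ++ l2) P <-> basic l1 P /\ basic l2 P.
Proof.
  unfold basic. split.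
  - intro l12. split; intros s s_in; apply l12, in_or_app; auto.
  - intros [l1P l2P] s s_in. apply in_app_or in s_in. destruct s_in; auto.
Qed.

Lemma basic_singleton (s : bool * A) P : basic [s] P <-> subbasic s P.
Proof.
  split.
  - intro sP. apply sP. left. reflexivity.
  - intros sP s' [<- | []]. exact sP.
Qed.

Lemma is_open_basic (l : list (bool * A)) : is_open (basic l).
Proof. intros P lP. exists l. split; [exact lP | intros Q lQ; exact lQ]. Qed.

Lemma is_open_emptyset : is_open (@emptyset A).
Proof. intros P []. Qed.

Lemma is_open_cup (U V : pfset A) : is_open U -> is_open V -> is_open (cup U V).
Proof.
  intros openU openV P [UP | VP].
  - destruct (openU P UP) as [l [lP lU]]. exists l. split; [exact lP |].
    intros Q lQ. left. auto.
  - destruct (openV P VP) as [l [lP lV]]. exists l. split; [exact lP |].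
    intros Q lQ. right. auto.
Qed.

Lemma is_open_cap (U V : pfset A) : is_open U -> is_open V -> is_open (cap U V).
Proof.
  intros openU openV P [UP VP].
  destruct (openU P UP) as [l1 [l1P l1U]], (openV P VP) as [l2 [l2P l2V]].
  exists (l1 ++ l2). split; [apply basic_app; auto |].
  intros Q l12Q. apply basic_app in l12Q. split; [apply l1U | apply l2V]; tauto.
Qed.

Lemma clopen_ext (U V : pfset A) : (forall P, U P <-> V P) -> clopen U -> clopen V.
Proof.
  intros UV [openU openCU]. split; eapply is_open_ext; try eassumption.
  intro P. unfold compl. rewrite (UV P). reflexivity.
Qed.

Lemma clopen_compl (U : pfset A) : clopen U -> clopen (compl U).
Proof.
  intros [openU openCU]. split; [exact openCU |].
  eapply is_open_ext; [| exact openU]. intro P. unfold compl. tauto.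
Qed.

Lemma clopen_emptyset : clopen (@emptyset A).
Proof.
  split; [exact is_open_emptyset |].
  apply (is_open_ext (U := basic [])); [| apply is_open_basic].
  intro P. unfold compl, emptyset. split; [tauto | intros _ _ []].
Qed.

Lemma clopen_fullset : clopen (@fullset A).
Proof.
  eapply clopen_ext, clopen_compl, clopen_emptyset.
  intro P. unfold compl, emptyset, fullset. tauto.
Qed.

Lemma clopen_cup (U V : pfset A) : clopen U -> clopen V -> clopen (cup U V).
Proof.
  intros [openU openCU] [openV openCV]. split; [apply is_open_cup; assumption |].
  eapply is_open_ext; [| apply (is_open_cap openCU openCV)].
  intro P. unfold compl, cup, cap. tauto.
Qed.

Lemma clopen_cap (U V : pfset A) : clopen U -> clopen V -> clopen (cap U V).
Proof.
  intros clopenU clopenV.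
  apply (clopen_ext (U := compl (cup (compl U) (compl V)))).
  - intro P. unfold compl, cup, cap. tauto.
  - apply clopen_compl, clopen_cup; apply clopen_compl; assumption.
Qed.

Lemma clopen_sigma (a : A) : clopen (sigma a).
Proof.
  split; [apply (is_open_ext (U := basic [(true, a)])) |
          apply (is_open_ext (U := basic [(false, a)]))];
    try apply is_open_basic; intro P; apply basic_singleton.
Qed.

Lemma clopen_clause (a b : A) : clopen (clause a b).
Proof.
  apply (clopen_ext (U := cup (compl (sigma a)) (sigma b))).
  - intro P. unfold cup, compl, sigma, clause. tauto.
  - apply clopen_cup; [apply clopen_compl |]; apply clopen_sigma.
Qed.

Lemma clopen_clauses (K : list (A * A)) : clopen (clauses K).
Proof.
  induction K as [| k K IH].
  - apply (clopen_ext (U := @fullset A)); [| exact clopen_fullset].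
    intro P. split; [intros _ k [] | intros _; exact I].
  - apply (clopen_ext (U := cap (clause (fst k) (snd k)) (clauses K))).
    + intro P. unfold cap, clauses. simpl. split.
      * intros [kP KP] k' [<- | k'_in]; auto.
      * auto.
    + apply clopen_cap; [apply clopen_clause | exact IH].
Qed.

Lemma clausal_clopen (U : pfset A) : clausal U -> clopen U.
Proof.
  intros [K UK]. eapply clopen_ext, clopen_clauses. intro P. symmetry. apply UK.
Qed.

End Topology.

Section ClopenClausal.
Variable A : WHB.

Lemma basic_difference (l : list (bool * A)) :
  exists m j, forall P, basic l P <-> mem m P /\ ~ mem j P.
Proof.
  induction l as [| [[|] c] l [m [j IH]]].
  - exists (top A), (bot A). intro P. split.
    + intros _. split; [apply mem_top | apply mem_bot].
    + intros _ s [].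
  - exists (meet A c m), j. intro P.
    change ((true, c) :: l) with ([(true, c)] ++ l).
    rewrite basic_app, basic_singleton, IH, mem_meet. unfold subbasic, sigma. simpl. tauto.
  - exists m, (join A c j). intro P.
    change ((false, c) :: l) with ([(false, c)] ++ l).
    rewrite basic_app, basic_singleton, IH, mem_join. unfold subbasic, compl, sigma. simpl. tauto.
Qed.

Inductive entail_closure (T : A -> A -> Prop) : A -> A -> Prop :=
| closure_le x y : le A x y -> entail_closure T x y
| closure_base x y : T x y -> entail_closure T x y
| closure_trans x y z : entail_closure T x y -> entail_closure T y z -> entail_closure T x z
| closure_meet x y z :
    entail_closure T x y -> entail_closure T x z -> entail_closure T x (meet A y z)
| closure_join x y z :
    entail_closure T x z -> entail_closure T y z -> entail_closure T (join A x y) z.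

Lemma entail_closure_entailment T : entailment A (entail_closure T).
Proof. split; [exact (closure_le T) | exact (closure_trans (T := T)) |
               exact (closure_meet (T := T)) | exact (closure_join (T := T))]. Qed.

Definition finitely_entailed (T : A -> A -> Prop) (x y : A) : Prop :=
  exists K, (forall k, In k K -> T (fst k) (snd k)) /\ forall Q, clauses K Q -> clause x y Q.

Lemma clauses_app K1 K2 (Q : PF A) : clauses (K1 ++ K2) Q <-> clauses K1 Q /\ clauses K2 Q.
Proof.
  unfold clauses. split.
  - intro K12. split; intros k k_in; apply K12, in_or_app; auto.
  - intros [K1Q K2Q] k k_in. apply in_app_or in k_in. destruct k_in; auto.
Qed.

Lemma finitely_entailed_combine T x1 y1 x2 y2 x y :
  finitely_entailed T x1 y1 -> finitely_entailed T x2 y2 ->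
  (forall Q, clause x1 y1 Q -> clause x2 y2 Q -> clause x y Q) ->
  finitely_entailed T x y.
Proof.
  intros [K1 [TK1 K1xy]] [K2 [TK2 K2xy]] combine. exists (K1 ++ K2). split.
  - intros k k_in. apply in_app_or in k_in. destruct k_in; auto.
  - intros Q K12. apply clauses_app in K12. destruct K12. auto.
Qed.

Lemma entail_closure_finite T x y : entail_closure T x y -> finitely_entailed T x y.
Proof.
  induction 1 as [x y xy | x y xy | x y z _ IHxy _ IHyz | x y z _ IHxy _ IHxz
                 | x y z _ IHxz _ IHyz].
  - exists []. split; [intros k [] |]. intros Q _ x_in. eapply mem_le; eassumption.
  - exists [(x, y)]. split.
    + intros k [<- | []]. exact xy.
    + intros Q xyQ. exact (xyQ (x, y) (or_introl eq_refl)).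
  - apply (finitely_entailed_combine IHxy IHyz). unfold clause. auto.
  - apply (finitely_entailed_combine IHxy IHxz). unfold clause.
    intros Q xy xz x_in. apply mem_meet. auto.
  - apply (finitely_entailed_combine IHxz IHyz). unfold clause.
    intros Q xz yz xy_in. apply mem_join in xy_in. tauto.
Qed.

Definition constant_on_diff (U : pfset A) (a b : A) : Prop :=
  (forall Q, mem a Q -> ~ mem b Q -> U Q) \/ (forall Q, mem a Q -> ~ mem b Q -> ~ U Q).

Lemma clopen_locally_constant (U : pfset A) (Q : PF A) :
  clopen U -> exists m j, mem m Q /\ ~ mem j Q /\ constant_on_diff U m j.
Proof.
  intros [openU openCU].
  destruct (classic (U Q)) as [UQ | UQ];
    [destruct (openU Q UQ) as [l [lQ lU]] | destruct (openCU Q UQ) as [l [lQ lU]]];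
    destruct (basic_difference l) as [m [j mj]]; exists m, j;
    apply mj in lQ; (split; [tauto | split; [tauto |]]).
  - left. intros Q' m_in j_out. apply lU, mj. auto.
  - right. intros Q' m_in j_out. apply lU, mj. auto.
Qed.

Lemma clopen_constant_cover (U : pfset A) :
  clopen U ->
  exists K, (forall k, In k K -> constant_on_diff U (fst k) (snd k)) /\
            forall Q, ~ clauses K Q.
Proof.
  intro clopenU.
  assert (top_bot : entail_closure (constant_on_diff U) (top A) (bot A)).
  { apply NNPP. intro not_top_bot.
    destruct (prime_filter_separation _ _ (entail_closure_entailment _) not_top_bot)
      as [Q [_ [_ closed]]].
    destruct (clopen_locally_constant Q clopenU) as [m [j [m_in [j_out constant]]]].
    exact (j_out (closed m j (closure_base _ _ _ constant) m_in)). }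
  destruct (entail_closure_finite top_bot) as [K [constK K_bot]].
  exists K. split; [exact constK |].
  intros Q KQ. exact (mem_bot Q (K_bot Q KQ (mem_top Q))).
Qed.

Lemma list_filter_prop (X : Type) (p : X -> Prop) (l : list X) :
  exists l', forall x, In x l' <-> In x l /\ p x.
Proof.
  induction l as [| x l [l' IH]].
  - exists []. simpl. tauto.
  - destruct (classic (p x)) as [px | npx]; [exists (x :: l') | exists l'];
      intro y; simpl; rewrite IH; intuition congruence.
Qed.

Lemma constant_cover_clausal (U : pfset A) (K : list (A * A)) :
  (forall k, In k K -> constant_on_diff U (fst k) (snd k)) -> (forall Q, ~ clauses K Q) ->
  clausal U.
Proof.
  intros constK cover.
  destruct (list_filter_prop
              (fun k => forall Q, mem (fst k) Q -> ~ mem (snd k) Q -> ~ U Q) K)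
    as [K' K'_spec].
  exists K'. intro P. split.
  - intros UP k k_in a_in. apply K'_spec in k_in. apply NNPP. intro b_out.
    exact (proj2 k_in P a_in b_out UP).
  - intros K'P. apply NNPP. intro not_UP.
    apply (cover P). intros k k_in a_in. apply NNPP. intro b_out.
    destruct (constK k k_in) as [inside | outside].
    + exact (not_UP (inside P a_in b_out)).
    + exact (b_out (K'P k (proj2 (K'_spec k) (conj k_in outside)) a_in)).
Qed.

Lemma clopen_clausal (U : pfset A) : clopen U -> clausal U.
Proof.
  intro clopenU. destruct (clopen_constant_cover clopenU) as [K [constK cover]].
  exact (constant_cover_clausal constK cover).
Qed.

End ClopenClausal.

Lemma clopen_G_A (A : WHB) (U : pfset A) : clopen U -> clopen (G_A U).
Proof. intro clopenU. apply clausal_clopen, clausal_G_A, clopen_clausal, clopenU. Qed.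

Lemma clopen_H_A (A : WHB) (U : pfset A) : clopen U -> clopen (H_A U).
Proof. intro clopenU. apply clausal_clopen, clausal_H_A, clopen_clausal, clopenU. Qed.

Lemma converse_box_adjunction (X : Type) (R S : X -> X -> Prop) (U V : X -> Prop) :
  (forall x y, R x y <-> S y x) ->
  (forall x, ~ (forall y, S x y -> ~ U y) -> V x) <-> (forall x, U x -> forall y, R x y -> V y).
Proof.
  intro RS. split.
  - intros diamond_V x Ux y Rxy. apply diamond_V. intro none.
    exact (none x (proj1 (RS x y) Rxy) Ux).
  - intros box_V x some. apply NNPP. intro not_Vx. apply some. intros y Sxy Uy.
    exact (not_Vx (box_V y Uy x (proj2 (RS y x) Sxy))).
Qed.

Theorem lemma6p1 (A : WHB) :
  tense_algebra_of_sets (@clopen A) (@G_A A) (@H_A A).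
Proof.
  refine (conj (clopen_emptyset A) (conj (clopen_fullset A)
         (conj (@clopen_cup A) (conj (@clopen_cap A) (conj (@clopen_compl A)
         (conj (@clopen_G_A A) (conj (@clopen_H_A A) (conj _ _)))))))).
  - intros U V _ _. apply converse_box_adjunction, R_A_converse.
  - intros U V _ _. apply converse_box_adjunction.
    intros P Q. symmetry. apply R_A_converse.
Qed.
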